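(* Let $(\mathcal{A},\mathbb{W},\mathfrak{s})$ be a weakly extriangulated category with $\mathcal{A}$ essentially small. Then $\mathbf{def}\,\mathbb{W}=\mathbf{Eff}\,\mathbb{W}\cap\mathbf{coh}(\mathcal{A})$, and this subcategory is topologizing in $\mathbf{coh}(\mathcal{A})$ (closed under finite direct sums and subquotients). Consequently, if $\mathbb{W}'$ is an additive sub-bifunctor of $\mathbb{W}$ such that $(\mathcal{A},\mathbb{W}',\mathfrak{s}|_{\mathbb{W}'})$ is weakly extriangulated, then $\mathbf{def}\,\mathbb{W}'$ is a topologizing subcategory of $\mathbf{def}\,\mathbb{W}$.
   Context: $\mathrm{Mod}\,\mathcal{A}$ denotes the abelian category of right $\mathcal{A}$-modules (contravariant additive functors $\mathcal{A}^{op}\to\mathrm{Ab}$). A module is finitely presented if it is the cokernel of a morphism between representable functors $\mathrm{Hom}(-,X)$; it is coherent if it is finitely presented and every finitely generated submodule (image of a morphism from a representable functor) is finitely presented. $\mathbf{coh}(\mathcal{A})$ is the full (abelian, exactly embedded) subcategory of coherent modules. A full subcategory of an abelian category is topologizing if it is closed under finite direct sums and subquotients. A weakly extriangulated category $(\mathcal{A},\mathbb{W},\mathfrak{s})$ consists of an additive category $\mathcal{A}$, an additive bifunctor $\mathbb{W}:\mathcal{A}^{op}\times\mathcal{A}\to\mathrm{Ab}$ and an exact realization $\mathfrak{s}$ assigning to each $\delta\in\mathbb{W}(C,A)$ an equivalence class of weak kernel-cokernel pairs $A\to B\to C$ (satisfying the realization axioms (R0)-(R2) and the axioms (EA2), (EA2)$^{op}$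 of Herschend–Liu–Nakaoka 1-exangulated categories, but not the axiom on composition of inflations/deflations). A conflation is a representative $X\xrightarrow{f}Y\xrightarrow{g}Z$ of some $\mathfrak{s}(\delta)$; $g$ is a deflation. The contravariant defect of a conflation is $\mathrm{coker}(\mathrm{Hom}(-,g):\mathrm{Hom}(-,Y)\to\mathrm{Hom}(-,Z))$, and $\mathbf{def}\,\mathbb{W}$ is the full subcategory of modules isomorphic to defects of conflations. $F\in\mathrm{Mod}\,\mathcal{A}$ is weakly effaceable if for every $Z$ and $z\in F(Z)$ there is a deflation $g:Y\to Z$ with $F(g)(z)=0$; $\mathbf{Eff}\,\mathbb{W}$ is the full subcategory of such modules. *)

From HB Require Import structures.
From mathcomp Require Import all_boot all_algebra.
Set Implicit Arguments. Unset Strict Implicit. Unset Printing Implicit Defensive.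
Import GRing.Theory.
Local Open Scope ring_scope.

Record PreAddCat := {
  obj :> Type;
  hom : obj -> obj -> zmodType;
  comp : forall X Y Z : obj, hom Y Z -> hom X Y -> hom X Z;
  idm : forall X : obj, hom X X;
  compA : forall X Y Z V (h : hom Z V) (g : hom Y Z) (f : hom X Y),
      comp h (comp g f) = comp (comp h g) f;
  comp1m : forall X Y (f : hom X Y), comp (idm Y) f = f;
  compm1 : forall X Y (f : hom X Y), comp f (idm X) = f;
  compDl : forall X Y Z (g g' : hom Y Z) (f : hom X Y),
      comp (g + g') f = comp g f + comp g' f;
  compDr : forall X Y Z (g : hom Y Z) (f f' : hom X Y),
      comp g (f + f') = comp g f + comp g f'
}.
Arguments hom {_}.
Arguments comp {_ X Y Z}.
Arguments idm {_}.

Section Cat.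
Variable C : PreAddCat.

Definition is_zero_obj (Z : C) := idm Z = 0.

Definition is_biprod (X Y S : C) (i1 : hom X S) (i2 : hom Y S)
    (p1 : hom S X) (p2 : hom S Y) :=
  [/\ comp p1 i1 = idm X, comp p2 i2 = idm Y, comp p1 i2 = 0,
      comp p2 i1 = 0 & comp i1 p1 + comp i2 p2 = idm S].

Definition is_additive :=
  (exists Z : C, is_zero_obj Z) /\
  forall X Y : C, exists (S : C) (i1 : hom X S) (i2 : hom Y S)
    (p1 : hom S X) (p2 : hom S Y), is_biprod i1 i2 p1 p2.

Lemma compBl_aux (X Y Z : C) (g g' : hom Y Z) (f : hom X Y) :
  comp (g - g') f = comp g f - comp g' f.
Proof. by apply/eqP; rewrite eq_sym subr_eq -compDl subrK. Qed.

Record Module := {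
  mob : C -> zmodType;
  mact : forall X Y : C, hom X Y -> mob Y -> mob X;
  mactB : forall X Y (f : hom X Y) (y y' : mob Y),
      mact f (y - y') = mact f y - mact f y';
  mactDf : forall X Y (f f' : hom X Y) (y : mob Y),
      mact (f + f') y = mact f y + mact f' y;
  mact1 : forall X (x : mob X), mact (idm X) x = x;
  mactM : forall X Y Z (g : hom Y Z) (f : hom X Y) (z : mob Z),
      mact (comp g f) z = mact f (mact g z)
}.
Arguments mact m {X Y} : rename.

Record ModMor (M N : Module) := {
  tr : forall X : C, mob M X -> mob N X;
  trB : forall X (x y : mob M X), tr (x - y) = tr x - tr y;
  trN : forall X Y (f : hom X Y) (y : mob M Y),
      tr (mact M f y) = mact N f (tr y)
}.
Arguments tr {M N} m X : rename.

Definition mono (M N : Module) (p : ModMor M N) :=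
  forall X : C, injective (tr p X).
Definition epi (M N : Module) (p : ModMor M N) :=
  forall (X : C) (y : mob N X), exists x, tr p X x = y.

Definition Rep (Y : C) : Module :=
  {| mob := fun X => hom X Y;
     mact := fun X Z (f : hom X Z) (h : hom Z Y) => comp h f;
     mactB := fun X Z f h h' => compBl_aux h h' f;
     mactDf := fun X Z f f' h => compDr h f f';
     mact1 := fun X h => compm1 h;
     mactM := fun X Z V g f h => compA h g f |}.

Definition mimage (M N : Module) (p : ModMor M N) : forall X : C, mob N X -> Prop :=
  fun X y => exists x, tr p X x = y.

(* The submodule N of M (given by its underlying subsets) is finitely
   presented: there is an epimorphism Hom(-,Y) ->> N (i.e. a morphism
   Hom(-,Y) -> M with image N) whose kernel is the image of Hom(-,f) for some
   f : Y' -> Y, i.e. N = coker Hom(-,f) up to isomorphism. *)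
Definition fp_sub (M : Module) (N : forall X : C, mob M X -> Prop) :=
  exists (Y Y' : C) (f : hom Y' Y) (p : ModMor (Rep Y) M),
    (forall X (x : mob M X), N X x <-> exists h : hom X Y, tr p X h = x) /\
    (forall (X : C) (h : hom X Y), tr p X h = 0 <-> exists k : hom X Y', h = comp f k).

Definition fin_pres (M : Module) := @fp_sub M (fun _ _ => True).

(* coherent: finitely presented and every finitely generated submodule
   (image of a morphism from a representable functor) is finitely presented *)
Definition coherent (M : Module) :=
  fin_pres M /\ forall (X : C) (q : ModMor (Rep X) M), fp_sub (mimage q).

Definition dsum_mob (M N : Module) (X : C) : zmodType := (mob M X * mob N X)%type.

Lemma dsum_mactB (M N : Module) X Y (f : hom X Y) (y y' : dsum_mob M N Y) :
  (mact M f (y - y').1, mact N f (y - y').2)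
  = ((mact M f y.1, mact N f y.2) - (mact M f y'.1, mact N f y'.2) : dsum_mob M N X).
Proof. by rewrite /= !mactB. Qed.

Lemma dsum_mactDf (M N : Module) X Y (f f' : hom X Y) (y : dsum_mob M N Y) :
  (mact M (f + f') y.1, mact N (f + f') y.2)
  = ((mact M f y.1, mact N f y.2) + (mact M f' y.1, mact N f' y.2) : dsum_mob M N X).
Proof. by rewrite !mactDf. Qed.

Lemma dsum_mact1 (M N : Module) X (x : dsum_mob M N X) :
  (mact M (idm X) x.1, mact N (idm X) x.2) = x.
Proof. by rewrite !mact1; case: x. Qed.

Lemma dsum_mactM (M N : Module) X Y Z (g : hom Y Z) (f : hom X Y) (z : dsum_mob M N Z) :
  (mact M (comp g f) z.1, mact N (comp g f) z.2)
  = (mact M f (mact M g z.1, mact N g z.2).1, mact N f (mact M g z.1, mact N g z.2).2).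
Proof. by rewrite !mactM. Qed.

Definition dsum (M N : Module) : Module :=
  {| mob := dsum_mob M N;
     mact := fun X Y (f : hom X Y) (y : dsum_mob M N Y) =>
               ((mact M f y.1, mact N f y.2) : dsum_mob M N X);
     mactB := @dsum_mactB M N;
     mactDf := @dsum_mactDf M N;
     mact1 := @dsum_mact1 M N;
     mactM := @dsum_mactM M N |}.

Definition is_zero_mod (M : Module) := forall (X : C) (x : mob M X), x = 0.

(* S is a topologizing subcategory of the (exactly embedded, abelian) full
   subcategory Amb of Mod C: S is contained in Amb, closed under finite direct
   sums (zero module and binary sums) and under subquotients taken in Amb
   (Q a quotient of a subobject L of M, with L, Q in Amb). *)
Definition topologizing (S Amb : Module -> Prop) :=
  [/\ (forall M, S M -> Amb M),
      (forall M, Amb M -> is_zero_mod M -> S M),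
      (forall M N, S M -> S N -> S (dsum M N)) &
      (forall (M L Q : Module) (i : ModMor L M) (q : ModMor L Q),
          S M -> Amb L -> Amb Q -> mono i -> epi q -> S Q)].

Record ExtBifun := {
  ext : C -> C -> zmodType;                                  (* ext Z X = W(Z, X) *)
  pushf : forall X X' Z : C, hom X X' -> ext Z X -> ext Z X';
  pullb : forall Z' Z X : C, hom Z' Z -> ext Z X -> ext Z' X;
  pushfB : forall X X' Z (a : hom X X') (d d' : ext Z X),
      pushf a (d - d') = pushf a d - pushf a d';
  pullbB : forall Z' Z X (c : hom Z' Z) (d d' : ext Z X),
      pullb c (d - d') = pullb c d - pullb c d';
  pushfD : forall X X' Z (a a' : hom X X') (d : ext Z X),
      pushf (a + a') d = pushf a d + pushf a' d;
  pullbD : forall Z' Z X (c c' : hom Z' Z) (d : ext Z X),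
      pullb (c + c') d = pullb c d + pullb c' d;
  pushf1 : forall X Z (d : ext Z X), pushf (idm X) d = d;
  pullb1 : forall Z X (d : ext Z X), pullb (idm Z) d = d;
  pushfM : forall X X' X'' Z (a' : hom X' X'') (a : hom X X') (d : ext Z X),
      pushf (comp a' a) d = pushf a' (pushf a d);
  pullbM : forall Z'' Z' Z X (c : hom Z' Z) (c' : hom Z'' Z') (d : ext Z X),
      pullb (comp c c') d = pullb c' (pullb c d);
  push_pull : forall X X' Z' Z (a : hom X X') (c : hom Z' Z) (d : ext Z X),
      pushf a (pullb c d) = pullb c (pushf a d)
}.

Section Extri.
Variable W : ExtBifun.
(* the realization s: [s d f g] means that A -f-> B -g-> D is a representative
   of the class s(d), for d in W(D, A) *)
Variable s : forall A B D : C, ext W D A -> hom A B -> hom B D -> Prop.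
(* P selects the extensions of an (additive sub-)bifunctor W' of W; the data
   (C, W', s|W') is then described by (W, s, P). *)
Variable P : forall D A : C, ext W D A -> Prop.

Definition sub_bifun :=
  [/\ (forall D A : C, P (0 : ext W D A)),
      (forall D A (d d' : ext W D A), P d -> P d' -> P (d - d')),
      (forall D A A' (a : hom A A') (d : ext W D A), P d -> P (pushf a d)) &
      (forall D' D A (c : hom D' D) (d : ext W D A), P d -> P (pullb c d))].

Definition all_ext : forall D A : C, ext W D A -> Prop := fun _ _ _ => True.

Definition wkcp (A B D : C) (f : hom A B) (g : hom B D) :=
  [/\ comp g f = 0,
      (forall (X : C) (h : hom X B), comp g h = 0 -> exists k : hom X A, h = comp f k) &
      (forall (X : C) (h : hom B X), comp h f = 0 -> exists k : hom D X, h = comp k g)].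

Definition seq_equiv (A B B' D : C) (f : hom A B) (g : hom B D) (f' : hom A B') (g' : hom B' D) :=
  exists (b : hom B B') (b' : hom B' B),
    [/\ comp b' b = idm B, comp b b' = idm B', comp b f = f' & comp g' b = g].

Definition exangle (A B D : C) (f : hom A B) (g : hom B D) (d : ext W D A) :=
  [/\ comp g f = 0,
      (forall (X : C) (h : hom X B), comp g h = 0 -> exists k : hom X A, h = comp f k),
      (forall (X : C) (h : hom X D), pullb h d = 0 <-> exists k : hom X B, h = comp g k),
      (forall (X : C) (h : hom B X), comp h f = 0 -> exists k : hom D X, h = comp k g) &
      (forall (X : C) (h : hom A X), pushf h d = 0 <-> exists k : hom B X, h = comp k f)].

(* s assigns to each d an equivalence class of weak kernel-cokernel pairs *)
Definition realization_ax :=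
  forall (A D : C) (d : ext W D A), P d ->
    (exists (B : C) (f : hom A B) (g : hom B D), s d f g) /\
    (forall (B : C) (f : hom A B) (g : hom B D), s d f g ->
       wkcp f g /\
       forall (B' : C) (f' : hom A B') (g' : hom B' D), s d f' g' <-> seq_equiv f g f' g').

Definition R0 :=
  forall (A D A' D' : C) (d : ext W D A) (d' : ext W D' A') (a : hom A A') (c : hom D D'),
    P d -> P d' -> pushf a d = pullb c d' ->
    forall (B B' : C) (f : hom A B) (g : hom B D) (f' : hom A' B') (g' : hom B' D'),
      s d f g -> s d' f' g' ->
      exists b : hom B B', comp b f = comp f' a /\ comp c g = comp g' b.

Definition R1 :=
  forall (A B D : C) (d : ext W D A) (f : hom A B) (g : hom B D),
    P d -> s d f g -> exangle f g d.

Definition R2 :=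
  forall Z : C, is_zero_obj Z -> forall A : C,
    s (0 : ext W Z A) (idm A) (0 : hom A Z) /\ s (0 : ext W A Z) (0 : hom Z A) (idm A).

(* (EA2): the morphism (1_A, b, c) is a good lift: its mapping cone
   B --[-g'; b]--> C (+) E --[c, g]--> D with extension f'_* d is a 1-exangle *)
Definition EA2 :=
  forall (A D D0 : C) (d : ext W D A) (c : hom D0 D), P d ->
  forall (B E : C) (f' : hom A B) (g' : hom B D0) (f : hom A E) (g : hom E D),
    s (pullb c d) f' g' -> s d f g ->
    exists b : hom B E, [/\ comp b f' = f, comp g b = comp c g' &
      forall (S : C) (i1 : hom D0 S) (i2 : hom E S) (p1 : hom S D0) (p2 : hom S E),
        is_biprod i1 i2 p1 p2 ->
        exangle (comp i1 (- g') + comp i2 b) (comp c p1 + comp g p2) (pushf f' d)].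

Definition EA2op :=
  forall (A D B : C) (d : ext W D A) (a : hom A B), P d ->
  forall (E Cc : C) (f' : hom B E) (g' : hom E D) (f : hom A Cc) (g : hom Cc D),
    s (pushf a d) f' g' -> s d f g ->
    exists b : hom Cc E, [/\ comp b f = comp f' a, comp g' b = g &
      forall (S : C) (i1 : hom B S) (i2 : hom Cc S) (p1 : hom S B) (p2 : hom S Cc),
        is_biprod i1 i2 p1 p2 ->
        exangle (comp i1 a + comp i2 f) (comp (- f') p1 + comp b p2) (pullb g' d)].

Definition weakly_extri := [/\ realization_ax, R0, R1, R2 & EA2 /\ EA2op].

Definition deflation (B D : C) (g : hom B D) :=
  exists (A : C) (f : hom A B) (d : ext W D A), P d /\ s d f g.

(* M is isomorphic to coker Hom(-, g) *)
Definition is_defect_of (M : Module) (B D : C) (g : hom B D) :=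
  exists p : ModMor (Rep D) M, epi p /\
    forall (X : C) (h : hom X D), tr p X h = 0 <-> exists k : hom X B, h = comp g k.

Definition defW (M : Module) :=
  exists (A B D : C) (d : ext W D A) (f : hom A B) (g : hom B D),
    [/\ P d, s d f g & is_defect_of M g].

Definition Eff (M : Module) :=
  forall (Z : C) (z : mob M Z), exists (Y : C) (g : hom Y Z),
    deflation g /\ mact M g z = 0.

End Extri.
End Cat.

(** A defect [coker Hom(-, g)] of a conflation [A -> B -g-> D] realizing [d] only
    depends on [d]: by (R1) its relations are the [h] with [h^* d = 0].  This
    makes defects coherent (the image of [Hom(-, X) -> M] is the defect of
    [u^* d]) and weakly effaceable (an element [u] is killed by a deflation of
    [u^* d]), and makes direct sums of defects defects of direct sums of
    extensions.  Conversely, if [M = coker Hom(-, f)] is weakly effaceable, a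
    deflation [g] kills the generator, so [g] factors through [f]; by (EA2) the
    mapping cone of a lift to [f^* d] is a 1-exangle with extension [f'_* d],
    whose relations are exactly the maps factoring through [f].  Subquotients
    stay weakly effaceable, so they are defects as soon as they are finitely
    presented, which gives both topologizing statements at once. *)
From Pilot Require Import Defs.
From Stdlib Require Import Setoid.
From HB Require Import structures.
From mathcomp Require Import ssreflect ssrfun ssrbool eqtype ssralg.
Import Pilot.Defs.
Set Implicit Arguments. Unset Strict Implicit. Unset Printing Implicit Defensive.
Import GRing.Theory.
Local Open Scope ring_scope.

Section Preadditive.
Variable C : PreAddCat.

Lemma compBr (X Y Z : C) (g : hom Y Z) (f f' : hom X Y) :
  comp g (f - f') = comp g f - comp g f'.
Proof. by apply/eqP; rewrite eq_sym subr_eq -compDr subrK. Qed.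

HB.instance Definition _ (X Y Z : C) (g : hom Y Z) :=
  GRing.isZmodMorphism.Build (hom X Y) (hom X Z) (comp g) (compBr g).

Lemma comp0m (X Y Z : C) (f : hom X Y) : comp (0 : hom Y Z) f = 0.
Proof. by apply: (addrI (comp (0 : hom Y Z) f)); rewrite -compDl !addr0. Qed.

Lemma compm0 (X Y Z : C) (g : hom Y Z) : comp g (0 : hom X Y) = 0.
Proof. exact: raddf0. Qed.

Lemma factors_biprod_sumP (X Y Y' E S : C) (f : hom Y' Y) (g : hom E Y) (k0 : hom E Y')
    (i1 : hom Y' S) (i2 : hom E S) (p1 : hom S Y') (p2 : hom S E) (h : hom X Y) :
  is_biprod i1 i2 p1 p2 -> g = comp f k0 ->
  (exists k, h = comp (comp f p1 + comp g p2) k) <-> exists k, h = comp f k.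
Proof.
case=> p1i1 _ _ p2i1 _ ->; split=> -[k ->].
  exists (comp p1 k + comp k0 (comp p2 k)).
  by rewrite compDl raddfD /= !compA.
exists (comp i1 k).
by rewrite compDl -!compA (compA p1) (compA p2) p1i1 p2i1 comp1m comp0m !compm0 addr0.
Qed.

HB.instance Definition _ (M N : Module C) (p : ModMor M N) (X : C) :=
  GRing.isZmodMorphism.Build (mob M X) (mob N X) (tr p (X:=X)) (fun x y => trB p x y).

HB.instance Definition _ (M : Module C) (X Y : C) (f : hom X Y) :=
  GRing.isZmodMorphism.Build (mob M Y) (mob M X) (mact (m:=M) f) (fun x y => mactB f x y).

Lemma tr_rep (M : Module C) (X Y : C) (q : ModMor (Rep X) M) (h : hom Y X) :
  tr q h = mact h (tr q (idm X)).
Proof. by rewrite -trN /= comp1m. Qed.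

Definition rep_mor (D D' : C) (a : hom D D') : ModMor (Rep D) (Rep D').
Proof.
refine (@Build_ModMor C (Rep D) (Rep D') (fun X h => comp a h) _ _) => /=.
- by move=> X h h'; rewrite raddfB.
- by move=> X Y f h; rewrite compA.
Defined.

Definition mor_comp (L M N : Module C) (p : ModMor M N) (q : ModMor L M) : ModMor L N.
Proof.
refine (@Build_ModMor C L N (fun X x => tr p (tr q x)) _ _).
- by move=> X x y; rewrite !raddfB.
- by move=> X Y f y; rewrite !trN.
Defined.

Definition pair_mor (L M N : Module C) (p : ModMor L M) (q : ModMor L N) :
  ModMor L (dsum M N).
Proof.
refine (@Build_ModMor C L (dsum M N)
  (fun X x => (tr p x, tr q x) : mob (dsum M N) X) _ _).
- by move=> X x y; rewrite !raddfB.
- by move=> X Y f y; rewrite /= !trN.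
Defined.

Definition zero_mor (L M : Module C) : ModMor L M.
Proof.
refine (@Build_ModMor C L M (fun X _ => 0) _ _).
- by move=> *; rewrite subr0.
- by move=> *; rewrite raddf0.
Defined.

Variable W : ExtBifun C.

HB.instance Definition _ (Z' Z X : C) (c : hom Z' Z) :=
  GRing.isZmodMorphism.Build (ext W Z X) (ext W Z' X) (pullb c) (pullbB c).

HB.instance Definition _ (X X' Z : C) (a : hom X X') :=
  GRing.isZmodMorphism.Build (ext W Z X) (ext W Z X') (pushf a) (pushfB a).

Lemma pushf0m (X X' Z : C) (d : ext W Z X) : pushf (0 : hom X X') d = 0.
Proof. by apply: (addrI (pushf (0 : hom X X') d)); rewrite -pushfD !addr0. Qed.

Definition ext_defect (M : Module C) (D A : C) (d : ext W D A) :=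
  exists p : ModMor (Rep D) M,
    epi p /\ forall (X : C) (h : hom X D), tr p h = 0 <-> pullb h d = 0.

Lemma ext_defect_zero (M : Module C) (D A : C) :
  is_zero_mod M -> ext_defect M (0 : ext W D A).
Proof.
move=> M0; exists (zero_mor (Rep D) M); split=> [X y|X h /=].
  by exists 0; rewrite (M0 _ y).
by rewrite raddf0.
Qed.

Lemma pullb_biprod_sum_eq0 (X A1 A2 D1 D2 SA SD : C)
    (ia1 : hom A1 SA) (ia2 : hom A2 SA) (pa1 : hom SA A1) (pa2 : hom SA A2)
    (pd1 : hom SD D1) (pd2 : hom SD D2) (d1 : ext W D1 A1) (d2 : ext W D2 A2)
    (h : hom X SD) :
  is_biprod ia1 ia2 pa1 pa2 ->
  pullb h (pushf ia1 (pullb pd1 d1) + pushf ia2 (pullb pd2 d2)) = 0 <->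
  pullb (comp pd1 h) d1 = 0 /\ pullb (comp pd2 h) d2 = 0.
Proof.
case=> pa1ia1 pa2ia2 pa1ia2 pa2ia1 _.
rewrite raddfD /= -!push_pull -!pullbM; split=> [e0|[-> ->]]; last first.
  by rewrite !raddf0 addr0.
split.
  have := congr1 (pushf pa1) e0.
  by rewrite raddfD /= -!pushfM pa1ia1 pa1ia2 pushf1 pushf0m addr0 raddf0.
have := congr1 (pushf pa2) e0.
by rewrite raddfD /= -!pushfM pa2ia2 pa2ia1 pushf1 pushf0m add0r raddf0.
Qed.

Lemma ext_defect_dsum (M N : Module C) (A1 A2 D1 D2 SA SD : C)
    (ia1 : hom A1 SA) (ia2 : hom A2 SA) (pa1 : hom SA A1) (pa2 : hom SA A2)
    (id1 : hom D1 SD) (id2 : hom D2 SD) (pd1 : hom SD D1) (pd2 : hom SD D2)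
    (d1 : ext W D1 A1) (d2 : ext W D2 A2) :
  is_biprod ia1 ia2 pa1 pa2 -> is_biprod id1 id2 pd1 pd2 ->
  ext_defect M d1 -> ext_defect N d2 ->
  ext_defect (dsum M N) (pushf ia1 (pullb pd1 d1) + pushf ia2 (pullb pd2 d2)).
Proof.
move=> biA [pd1id1 pd2id2 pd1id2 pd2id1 _] [p [epi_p ker_p]] [q [epi_q ker_q]].
exists (pair_mor (mor_comp p (rep_mor pd1)) (mor_comp q (rep_mor pd2))).
split=> [X [x y]|X h].
  have [u <-] := epi_p X x; have [v <-] := epi_q X y.
  exists (comp id1 u + comp id2 v) => /=.
  rewrite !raddfD /= !compA pd1id1 pd2id2 pd1id2 pd2id1 !comp0m !comp1m.
  by rewrite !raddf0 addr0 add0r.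
rewrite (pullb_biprod_sum_eq0 pd1 pd2 d1 d2 h biA) -ker_p -ker_q /=.
by split=> [[-> ->]|[-> ->]].
Qed.

Lemma Eff_subquotient
    (s : forall A B D : C, ext W D A -> hom A B -> hom B D -> Prop)
    (P : forall D A : C, ext W D A -> Prop) (M L Q : Module C)
    (i : ModMor L M) (q : ModMor L Q) :
  Eff s P M -> mono i -> epi q -> Eff s P Q.
Proof.
move=> effM mono_i epi_q Z z; have [l <-] := epi_q Z z.
have [Y [g [defl_g gl0]]] := effM Z (tr i l).
exists Y, g; split=> //.
rewrite -trN (_ : mact g l = 0) ?raddf0 //.
by apply: mono_i; rewrite trN gl0 raddf0.
Qed.

Lemma defW_mono
    (s : forall A B D : C, ext W D A -> hom A B -> hom B D -> Prop)
    (P P' : forall D A : C, ext W D A -> Prop) (M : Module C) :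
  (forall D A (d : ext W D A), P D A d -> P' D A d) -> defW s P M -> defW s P' M.
Proof.
move=> PP' [A [B [D [d [f [g [Pd sd defM]]]]]]].
by exists A, B, D, d, f, g; split=> //; apply: PP'.
Qed.

End Preadditive.

Section Defects.
Variables (C : PreAddCat) (W : ExtBifun C)
  (s : forall A B D : C, ext W D A -> hom A B -> hom B D -> Prop)
  (P : forall D A : C, ext W D A -> Prop).
Hypotheses (addC : is_additive C) (subP : sub_bifun P) (extriP : weakly_extri s P).

Lemma P_pullb (D' D A : C) (c : hom D' D) (d : ext W D A) : P d -> P (pullb c d).
Proof. by case: subP => _ _ _; apply. Qed.

Lemma P_pushf (D A A' : C) (a : hom A A') (d : ext W D A) : P d -> P (pushf a d).
Proof. by case: subP => _ _ + _; apply. Qed.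

Lemma P_add (D A : C) (d d' : ext W D A) : P d -> P d' -> P (d + d').
Proof.
case: subP => P0 PB _ _ Pd Pd'.
have -> : d + d' = d - (0 - d') by rewrite sub0r opprK.
by apply: (PB) => //; apply: (PB).
Qed.

Lemma realization_exists (A D : C) (d : ext W D A) :
  P d -> exists B (f : hom A B) (g : hom B D), s d f g.
Proof. by case: extriP => real _ _ _ _ Pd; case: (real _ _ _ Pd). Qed.

Lemma pullb_eq0_factors (A B D : C) (d : ext W D A) (f : hom A B) (g : hom B D) :
  P d -> s d f g ->
  forall (X : C) (h : hom X D), pullb h d = 0 <-> exists k : hom X B, h = comp g k.
Proof. by case: extriP => _ _ R1 _ _ Pd sd; case: (R1 _ _ _ _ _ _ Pd sd). Qed.

Lemma defW_extP (M : Module C) :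
  defW s P M <-> exists (D A : C) (d : ext W D A), P d /\ ext_defect M d.
Proof.
split=> [[A [B [D [d [f [g [Pd sd [p [epi_p ker_p]]]]]]]]]|[D [A [d [Pd [p [epi_p ker_p]]]]]]].
  exists D, A, d; split=> //; exists p; split=> // X h.
  by rewrite ker_p (pullb_eq0_factors Pd sd).
have [B [f [g sd]]] := realization_exists Pd.
exists A, B, D, d, f, g; split=> //; exists p; split=> // X h.
by rewrite ker_p (pullb_eq0_factors Pd sd).
Qed.

Lemma fp_sub_ext_kernel (M : Module C) (N : forall X : C, mob M X -> Prop)
    (D A : C) (d : ext W D A) (p : ModMor (Rep D) M) :
  P d -> (forall X x, N X x <-> exists h, tr p h = x) ->
  (forall X (h : hom X D), tr p h = 0 <-> pullb h d = 0) -> fp_sub N.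
Proof.
move=> Pd imN ker_p; have [B [f [g sd]]] := realization_exists Pd.
exists D, B, g, p; split=> // X h.
by rewrite ker_p (pullb_eq0_factors Pd sd).
Qed.

Lemma ext_defect_coherent (M : Module C) (D A : C) (d : ext W D A) :
  P d -> ext_defect M d -> coherent M.
Proof.
move=> Pd [p [epi_p ker_p]]; split.
  by apply: (fp_sub_ext_kernel Pd _ ker_p) => X x; split=> // _; apply: epi_p.
move=> X q; have [u pu] := epi_p X (tr q (idm X)).
apply: (fp_sub_ext_kernel (p := q) (P_pullb u Pd)) => // Y h.
by rewrite tr_rep -pu -trN ker_p pullbM.
Qed.

Lemma ext_defect_Eff (M : Module C) (D A : C) (d : ext W D A) :
  P d -> ext_defect M d -> Eff s P M.
Proof.
move=> Pd [p [epi_p ker_p]] Z z; have [u <-] := epi_p Z z.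
have Pud := P_pullb u Pd; have [E [f' [g' sd']]] := realization_exists Pud.
exists E, g'; split; first by exists A, f', (pullb u d).
rewrite -trN ker_p /= pullbM (pullb_eq0_factors Pud sd').
by exists (idm E); rewrite compm1.
Qed.

Lemma Eff_fin_pres_ext_defect (M : Module C) :
  Eff s P M -> fin_pres M -> exists (D A : C) (d : ext W D A), P d /\ ext_defect M d.
Proof.
move=> effM [Y [Y' [f [p [im_p ker_p]]]]].
have [E [g [[A [fA [d [Pd sd]]]] pg0]]] := effM Y (tr p (idm Y)).
have [k0 g_fk0] : exists k0, g = comp f k0 by apply/ker_p; rewrite tr_rep.
have [B [f' [g' sd']]] := realization_exists (P_pullb f Pd).
have [EA2P _] : EA2 s P /\ EA2op s P by case: extriP.
have [b [_ _ cone]] := EA2P _ _ _ _ _ Pd _ _ _ _ _ _ sd' sd.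
have [_ /(_ Y' E) [S [i1 [i2 [p1 [p2 biS]]]]]] := addC.
have [_ _ cone_pullb _ _] := cone S i1 i2 p1 p2 biS.
exists Y, B, (pushf f' d); split; first exact: P_pushf.
exists p; split=> [X y|X h]; first by have [+ _] := im_p X y; apply.
by rewrite ker_p cone_pullb (factors_biprod_sumP _ biS g_fk0).
Qed.

Lemma defW_dsum (M N : Module C) : defW s P M -> defW s P N -> defW s P (dsum M N).
Proof.
rewrite !defW_extP => -[D1 [A1 [d1 [Pd1 defM]]]] [D2 [A2 [d2 [Pd2 defN]]]].
have [_ biprods] := addC.
have [SA [ia1 [ia2 [pa1 [pa2 biA]]]]] := biprods A1 A2.
have [SD [id1 [id2 [pd1 [pd2 biD]]]]] := biprods D1 D2.
exists SD, SA, (pushf ia1 (pullb pd1 d1) + pushf ia2 (pullb pd2 d2)); split.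
  by apply: P_add; apply/P_pushf/P_pullb.
exact: ext_defect_dsum biA biD defM defN.
Qed.

Lemma defW_zero (M : Module C) : is_zero_mod M -> defW s P M.
Proof.
move=> M0; apply/defW_extP; have [[Z _] _] := addC.
exists Z, Z, 0; split; first by case: subP.
exact: ext_defect_zero.
Qed.

Lemma defW_Eff_coherent (M : Module C) : defW s P M <-> Eff s P M /\ coherent M.
Proof.
split=> [/defW_extP [D [A [d [Pd defM]]]]|[effM [fpM _]]].
  by split; [apply: ext_defect_Eff Pd defM | apply: ext_defect_coherent Pd defM].
exact/defW_extP/Eff_fin_pres_ext_defect.
Qed.

Lemma defW_topologizing (Amb : Module C -> Prop) :
  (forall M, defW s P M -> Amb M) -> (forall M, Amb M -> fin_pres M) ->
  topologizing (defW s P) Amb.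
Proof.
move=> defW_Amb Amb_fp; split=> //.
- by move=> M _; apply: defW_zero.
- exact: defW_dsum.
move=> M L Q i q /defW_Eff_coherent [effM _] _ /Amb_fp fpQ mono_i epi_q.
exact/defW_extP/Eff_fin_pres_ext_defect/fpQ/(Eff_subquotient effM mono_i epi_q).
Qed.

End Defects.

Theorem mainTheorem14 (C : PreAddCat) (W : ExtBifun C)
  (s : forall A B D : C, ext W D A -> hom A B -> hom B D -> Prop) :
  is_additive C ->
  weakly_extri s (@all_ext C W) ->
  (forall M : Module C,
     defW s (@all_ext C W) M <-> Eff s (@all_ext C W) M /\ coherent M) /\
  topologizing (defW s (@all_ext C W)) (@coherent C) /\
  (forall P' : forall D A : C, ext W D A -> Prop,
     sub_bifun P' -> weakly_extri s P' ->
     topologizing (defW s P') (defW s (@all_ext C W))).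
Proof.
move=> addC extri.
have sub_all : sub_bifun (@all_ext C W) by [].
have defW_coh M : defW s (@all_ext C W) M -> coherent M.
  by move/(defW_Eff_coherent addC sub_all extri) => [].
split; first exact: defW_Eff_coherent.
split; first by apply: defW_topologizing => // M [].
move=> P' subP' extri'.
apply: defW_topologizing => // [M|M /defW_coh []//].
exact: defW_mono.
Qed.
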